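(* Let $i\in\{0,\dots,t-1\}$ and let $i(0),\dots,i(\lg t-1)\in\{0,1\}$ be such that $i=\sum_{k}i(k)\cdot 2^k$. Let $\mathcal Y_i=\{y^{i(k),i(\ell)}_{k,\ell} : 0\le k\le\ell\le\lg t-1\}$, where $y^{i(k),i(\ell)}_{k,\ell}$ is taken to be the empty item (weight and profit $0$) if $i(k)=i(\ell)=0$. Then $p(\mathcal Y_i)=w(\mathcal Y_i)+\left(\binom{i+1}{2}-\frac{i}{3}\right)\cdot 9nB$.
   Context: $n\ge1$ and $B$ are positive integers (in the paper $B=B_n+nX$ with $B_n=\sum_{j=1}^{3n}(3n+1)^j$, $X=3tnB_n$). Let $t$ be a power of two, $\lg$ the base-2 logarithm, $Y=3t^2nB$, and fix a bijection $f:\{0,\dots,\lg t-1\}^2\to\{0,\dots,(\lg t)^2-1\}$. Quadratization items: for each $0\le k<\ell\le\lg t-1$, items $y^{1,0}_{k,\ell}$ with $w=p=3^{f(k,\ell)}Y$; $y^{0,1}_{k,\ell}$ with $w=p=3^{f(\ell,k)}Y$; and $y^{1,1}_{k,\ell}$ with $w=(3^{f(k,\ell)}+3^{f(\ell,k)})Y$ and $p=(3^{f(k,\ell)}+3^{f(\ell,k)})Y+2^{k+\ell}\cdot 9nB$; and for each $0\le k\le\lg t-1$ an item $y^{1,1}_{k,k}$ with $w=3^{f(k,k)}Y$ and $p=3^{f(k,k)}Y+2^{2k}\cdot 4.5nB+2^k\cdot 1.5nB$. For a set $\mathcal S$ of items, $w(\mathcal S)=\sum_{x\in\mathcal S}w(x)$,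 $p(\mathcal S)=\sum_{x\in\mathcal S}p(x)$. *)

From mathcomp Require Import all_boot all_order all_algebra.
Set Implicit Arguments. Unset Strict Implicit. Unset Printing Implicit Defensive.
Import Order.TTheory GRing.Theory Num.Theory.
Local Open Scope ring_scope.

(* lg t = L, i.e. t = 2^L.  Pairs (k,l) of 'I_L are bit positions. *)

(* Quadratization items.  [Ydiag k] is y^{1,1}_{k,k}; [Y11 k l] is
   y^{1,1}_{k,l} for k < l; [Yempty] is the empty item. *)
Inductive qitem (L : nat) : Type :=
| Y10 of 'I_L & 'I_L
| Y01 of 'I_L & 'I_L
| Y11 of 'I_L & 'I_L
| Ydiag of 'I_L
| Yempty.

Definition bigY (n B L : nat) : rat := (3 * (2 ^ L) ^ 2 * n * B)%N%:R.

Section Items.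
Variables (n B L : nat) (f : 'I_L * 'I_L -> 'I_(L * L)).

Definition e3 (k l : 'I_L) : rat := (3 ^ (f (k, l)))%N%:R.

Definition qweight (x : qitem L) : rat :=
  match x with
  | Y10 k l => e3 k l * bigY n B L
  | Y01 k l => e3 l k * bigY n B L
  | Y11 k l => (e3 k l + e3 l k) * bigY n B L
  | Ydiag k => e3 k k * bigY n B L
  | Yempty => 0
  end.

Definition qprofit (x : qitem L) : rat :=
  match x with
  | Y10 k l => e3 k l * bigY n B L
  | Y01 k l => e3 l k * bigY n B L
  | Y11 k l => (e3 k l + e3 l k) * bigY n B L
                 + (2 ^ (k + l))%N%:R * 9 * n%:R * B%:R
  | Ydiag k => e3 k k * bigY n B L
                 + (2 ^ (2 * k))%N%:R * (9 / 2) * n%:R * B%:R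
                 + (2 ^ k)%N%:R * (3 / 2) * n%:R * B%:R
  | Yempty => 0
  end.
End Items.

Definition sel_item (L : nat) (b : 'I_L -> bool) (k l : 'I_L) : qitem L :=
  if k == l then (if b k then Ydiag k else Yempty L)
  else match b k, b l with
       | true, false => Y10 k l
       | false, true => Y01 k l
       | true, true => Y11 k l
       | false, false => Yempty L
       end.

Definition wY (n B L : nat) (f : 'I_L * 'I_L -> 'I_(L * L)) (b : 'I_L -> bool) : rat :=
  \sum_(k < L) \sum_(l < L | (k <= l)%N) qweight n B f (sel_item b k l).
Definition pY (n B L : nat) (f : 'I_L * 'I_L -> 'I_(L * L)) (b : 'I_L -> bool) : rat :=
  \sum_(k < L) \sum_(l < L | (k <= l)%N) qprofit n B f (sel_item b k l).

(* Write [x_k = i(k) 2^k], so that [i = sum_k x_k].  An item [y_{k,l}] of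
   [Y_i] has profit exceeding its weight exactly when its bits are set, by
   [9nB x_k x_l] for [k < l] and by [9nB (x_k^2/2 + x_k/6)] for [k = l]
   (using [i(k)^2 = i(k)]).  Summed over [k <= l] this is
   [9nB ((sum_k x_k)^2/2 + (sum_k x_k)/6) = 9nB (i^2/2 + i/6)
    = 9nB (C(i+1,2) - i/3)]. *)
From mathcomp Require Import all_boot all_order all_algebra.
From mathcomp Require Import ring.
Set Implicit Arguments. Unset Strict Implicit. Unset Printing Implicit Defensive.
Import Order.TTheory GRing.Theory Num.Theory.
Local Open Scope ring_scope.

Section UpperTriangularSums.
Variables (R : nmodType) (L : nat).

Lemma sum_sym_upper (g : 'I_L -> 'I_L -> R) : (forall k l, g k l = g l k) ->
  \sum_(k < L) \sum_(l < L) g k l =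
  \sum_(k < L) \sum_(l < L | (k <= l)%N) (if k == l then g k k else g k l *+ 2).
Proof.
move=> g_sym.
have split_row k : \sum_(l < L) g k l =
    \sum_(l < L | (k <= l)%N) g k l + \sum_(l < L) (if (l < k)%N then g k l else 0).
  rewrite (bigID (fun l : 'I_L => (k <= l)%N)) /= [X in _ + X]big_mkcond.
  by congr (_ + _); apply: eq_bigr => l _; rewrite -ltnNge.
under eq_bigr do rewrite split_row.
rewrite big_split /= [X in _ + X]exchange_big -big_split /=.
apply: eq_bigr => k _; rewrite big_mkcond [in RHS]big_mkcond -big_split /=.
apply: eq_bigr => l _; rewrite [g l k]g_sym.
case: (eqVneq k l) => [-> | neq_kl]; first by rewrite leqnn ltnn addr0.
have /negbTE neq_kl_nat : (k : nat) != l by [].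
by case: ltngtP neq_kl_nat => //= _ _; rewrite ?add0r ?addr0.
Qed.

Lemma sum_upper_diag (F : 'I_L -> R) :
  \sum_(k < L) \sum_(l < L | (k <= l)%N) (if k == l then F k else 0) = \sum_(k < L) F k.
Proof.
apply: eq_bigr => k _; rewrite (bigD1 k) ?leqnn //= eqxx big1 ?addr0 //.
by move=> l /andP[_]; rewrite eq_sym => /negbTE ->.
Qed.

End UpperTriangularSums.

Lemma sqr_sum_upper (R : comPzRingType) (L : nat) (x : 'I_L -> R) :
  (\sum_(k < L) x k) ^+ 2 =
  \sum_(k < L) \sum_(l < L | (k <= l)%N) (if k == l then x k ^+ 2 else (x k * x l) *+ 2).
Proof.
rewrite expr2 mulr_suml.
under eq_bigr do rewrite mulr_sumr.
rewrite (sum_sym_upper (g := fun k l => x k * x l)) => [|k l]; last exact: mulrC.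
by under eq_bigr do under eq_bigr do rewrite -expr2.
Qed.

Definition bit_value (L : nat) (b : 'I_L -> bool) (k : 'I_L) : rat :=
  (b k)%:R * 2 ^+ k.

Lemma natr_bits (L : nat) (b : 'I_L -> bool) :
  (\sum_(k < L) b k * 2 ^ k)%N%:R = \sum_k bit_value b k.
Proof. by rewrite natr_sum; apply: eq_bigr => k _; rewrite natrM natrX. Qed.

Lemma qprofit_sub_qweight (n B L : nat) (f : 'I_L * 'I_L -> 'I_(L * L))
    (b : 'I_L -> bool) (k l : 'I_L) :
  let x := bit_value b in
  qprofit n B f (sel_item b k l) - qweight n B f (sel_item b k l) =
  9 * n%:R * B%:R *
    ((if k == l then x k ^+ 2 else (x k * x l) *+ 2) / 2
     + (if k == l then x k else 0) / 6).
Proof.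
rewrite /bit_value /sel_item; case: (eqVneq k l) => [_|_].
  case: (b k) => /=; last by rewrite mul0r expr0n subrr; ring.
  by rewrite mul1r !natrX mulnC exprM; field.
case: (b k); case: (b l) => /=; rewrite ?mul0r ?mul1r ?subrr; try ring.
by rewrite !natrX exprD; field.
Qed.

Lemma natr_bin2S (i : nat) : 'C(i.+1, 2)%:R = (i%:R + 1) * i%:R / 2 :> rat.
Proof.
have := mul_bin_diag i.+1 1; rewrite bin1 /= => /(congr1 (fun m => m%:R : rat)).
by rewrite !natrM -addn1 natrD => ->; field.
Qed.

Theorem lemma4 (n B L : nat) (f : 'I_L * 'I_L -> 'I_(L * L)) :
  (1 <= n)%N -> (0 < B)%N -> bijective f ->
  forall (i : nat) (b : 'I_L -> bool),
    (i < 2 ^ L)%N ->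
    i = (\sum_(k < L) b k * 2 ^ k)%N ->
    pY n B f b = wY n B f b + ('C(i.+1, 2)%:R - i%:R / 3) * 9 * n%:R * B%:R.
Proof.
move=> _ _ _ i b _ i_bits.
have gain : pY n B f b - wY n B f b =
    9 * n%:R * B%:R * ((\sum_k bit_value b k) ^+ 2 / 2
                       + (\sum_k bit_value b k) / 6).
  rewrite /pY /wY -sumrB sqr_sum_upper -(sum_upper_diag (bit_value b)).
  rewrite !mulr_suml -big_split /= mulr_sumr; apply: eq_bigr => k _.
  rewrite -sumrB !mulr_suml -big_split /= mulr_sumr; apply: eq_bigr => l _.
  exact: qprofit_sub_qweight.
apply/eqP; rewrite addrC -subr_eq gain -natr_bits -i_bits natr_bin2S.
by apply/eqP; field.
Qed.
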